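(* If $A_1,\ldots,A_n$ are sequentially distorted subsets of a group $G$, then $A:=A_1A_2\cdots A_n=\{a_1a_2\cdots a_n: a_i\in A_i\}$ is sequentially distorted in $G$. Moreover, if each $A_j$ is strongly distorted, then $A$ is strongly distorted.
   Context: For $S\subset G$ and $k\in\mathbb N$, $S^k=\{s_1\cdots s_k: s_i\in S\}$. A subset $A$ of $G$ is sequentially distorted if there is a sequence $(w_n)\subset\mathbb N$ such that for every sequence $(a_n)\subset A$ there is a finite $S\subset G$ with $a_n\in S^{w_n}$ for all $n$. It is strongly distorted if there are $m\in\mathbb N$ and $(w_n)\subset\mathbb N$ such that for every sequence $(a_n)\subset A$ there is $S\subset G$ of cardinality $m$ with $a_n\in S^{w_n}$ for all $n$. *)

From mathcomp Require Import all_boot.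
Set Implicit Arguments. Unset Strict Implicit. Unset Printing Implicit Defensive.

Section Distortion.
Variable G : groupType.

Definition in_pow (S : seq G) (k : nat) (x : G) : Prop :=
  exists s : 'I_k -> G, (forall i, s i \in S) /\ x = \big[mul/one]_(i < k) s i.

Definition seq_distorted (A : G -> Prop) : Prop :=
  exists w : nat -> nat, (forall n, 0 < w n) /\
    forall a : nat -> G, (forall n, A (a n)) ->
      exists S : seq G, forall n, in_pow S (w n) (a n).

Definition strongly_distorted (A : G -> Prop) : Prop :=
  exists (m : nat) (w : nat -> nat), (forall n, 0 < w n) /\
    forall a : nat -> G, (forall n, A (a n)) ->
      exists S : seq G, uniq S /\ size S = m /\
        forall n, in_pow S (w n) (a n).

Definition prod_set (n : nat) (A : 'I_n -> G -> Prop) (x : G) : Prop :=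
  exists a : 'I_n -> G, (forall i, A i (a i)) /\ x = \big[mul/one]_(i < n) a i.

End Distortion.

(* Write a_k = a_k1 ... a_kn with a_ki in A_i.  For each i the sequence
   (a_ki)_k lies in A_i, so a_ki is in S_i^(w_i k) for a finite S_i; then
   a_k is in S^(w_1 k + ... + w_n k) for the union S of the S_i.  In the
   strong case S has at most m_1 + ... + m_n elements; since every element
   of S can be used in a product or ignored, S may be enlarged to a set of a
   size M fixed in advance: M = m_1 + ... + m_n, or |G| if G is smaller. *)
From Stdlib Require Import Classical ClassicalEpsilon.
From mathcomp Require Import all_boot.

Set Implicit Arguments.
Unset Strict Implicit.
Unset Printing Implicit Defensive.

Section Padding.
Variable T : eqType.

Lemma uniq_pad (U V : seq T) m :
  uniq U -> size U <= m -> uniq V -> size V = m ->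
  exists W, [/\ uniq W, size W = m & {subset U <= W}].
Proof.
move=> uU sU uV sV; set F := [seq v <- V | v \notin U].
have uUF : uniq (U ++ F).
  rewrite cat_uniq uU filter_uniq //= andbT.
  by apply/hasPn => x; rewrite mem_filter => /andP[].
have sUF : m <= size (U ++ F).
  rewrite -sV; apply: uniq_leq_size => // x xV; rewrite mem_cat mem_filter xV.
  by case: (x \in U).
exists (take m (U ++ F)); split; first exact: take_uniq.
  exact: size_takel.
by move=> x xU; rewrite take_cat ltnNge sU /= mem_cat xU.
Qed.

(* M < N happens when T is finite with fewer than N elements. *)
Lemma exists_max_uniq_size N : exists M,
  (exists V : seq T, uniq V /\ size V = M) /\
  forall U : seq T, uniq U -> size U <= N -> size U <= M.
Proof.
elim: N => [|N [M [exV maxM]]].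
  by exists 0; split=> [|U _]; [exists [::] | rewrite leqn0].
case: (classic (exists V : seq T, uniq V /\ size V = N.+1)) => [exV'|noV].
  by exists N.+1; split.
exists M; split=> // U uU; rewrite leq_eqVlt => /orP[/eqP sU | ]; last exact: maxM.
by case: noV; exists U.
Qed.

End Padding.

Section Powers.
Variable G : groupType.
Implicit Types (S : seq G) (x y : G).

Lemma in_pow0 S : in_pow S 0 one.
Proof. by exists (fun=> one); split; [case | rewrite big_ord0]. Qed.

Lemma in_pow_mul S k l x y :
  in_pow S k x -> in_pow S l y -> in_pow S (k + l) (mul x y).
Proof.
move=> [s [sS ->]] [t [tS ->]].
exists (fun i => match split i with inl j => s j | inr j => t j end); split.
  by move=> i; case: (split i).
rewrite big_split_ord /=; congr mul; apply: eq_bigr => i _.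
  by rewrite (unsplitK (inl _ i)).
by rewrite (unsplitK (inr _ i)).
Qed.

Lemma sub_in_pow S S' k x : {subset S <= S'} -> in_pow S k x -> in_pow S' k x.
Proof. by move=> sSS' [s [sS ->]]; exists s; split=> // i; apply: sSS'. Qed.

Lemma in_pow_prod n S (w : 'I_n -> nat) (f : 'I_n -> G) :
  (forall i, in_pow S (w i) (f i)) ->
  in_pow S (\sum_(i < n) w i) (\big[mul/one]_(i < n) f i).
Proof.
elim: n w f => [|n IHn] w f fS; first by rewrite !big_ord0; apply: in_pow0.
rewrite big_ord_recr [X in in_pow _ _ X]big_ord_recr /=.
by apply: in_pow_mul; [apply: IHn => i | ]; apply: fS.
Qed.

Lemma in_pow_flatten n (S : 'I_n -> seq G) (w : 'I_n -> nat) (f : 'I_n -> G) :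
  (forall i, in_pow (S i) (w i) (f i)) ->
  in_pow (flatten [seq S i | i <- enum 'I_n])
         (\sum_(i < n) w i) (\big[mul/one]_(i < n) f i).
Proof.
move=> fS; apply: in_pow_prod => i; apply: sub_in_pow (fS i) => y yS.
by apply/flatten_mapP; exists i; rewrite ?mem_enum.
Qed.

Lemma strongly_distorted_size_le (A : G -> Prop) m (w : nat -> nat) :
  (forall k, 0 < w k) ->
  (forall a : nat -> G, (forall k, A (a k)) ->
     exists S, size S <= m /\ forall k, in_pow S (w k) (a k)) ->
  strongly_distorted A.
Proof.
move=> w_gt0 distA; have [M [[V [uV sV]] maxM]] := exists_max_uniq_size G m.
exists M, w; split=> // a Aa; have [S [sS aS]] := distA a Aa.
have [|W [uW sW sSW]] := uniq_pad (undup_uniq S) _ uV sV.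
  by apply: maxM; rewrite ?undup_uniq // (leq_trans (size_undup S)).
exists W; split=> //; split=> // k; apply: sub_in_pow (aS k) => y yS.
by apply: sSW; rewrite mem_undup.
Qed.

End Powers.

Section ProductSets.
Variables (G : groupType) (n : nat) (A : 'I_n -> G -> Prop).
Hypothesis n_gt0 : 0 < n.

Lemma sum_ord_gt0 (w : 'I_n -> nat) : (forall i, 0 < w i) -> 0 < \sum_(i < n) w i.
Proof. by move=> w_gt0; rewrite (bigD1 (Ordinal n_gt0)) //= addn_gt0 w_gt0. Qed.

Lemma prod_set_factors (x : nat -> G) : (forall k, prod_set A (x k)) ->
  exists a : nat -> 'I_n -> G, (forall k i, A i (a k i)) /\
    forall k, x k = \big[mul/one]_(i < n) a k i.
Proof. by move=> /choice[a aP]; exists a; split=> k; case: (aP k). Qed.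

Lemma seq_distorted_prod_set :
  (forall i, seq_distorted (A i)) -> seq_distorted (prod_set A).
Proof.
move=> /choice[w wP]; exists (fun k => \sum_(i < n) w i k); split.
  by move=> k; apply: sum_ord_gt0 => i; case: (wP i).
move=> x /prod_set_factors[a [aA xE]].
have /choice[S aS] : forall i, exists S, forall k, in_pow S (w i k) (a k i).
  by move=> i; case: (wP i) => _; apply=> k; apply: aA.
by exists (flatten [seq S i | i <- enum 'I_n]) => k; rewrite xE; apply: in_pow_flatten.
Qed.

Lemma strongly_distorted_prod_set :
  (forall i, strongly_distorted (A i)) -> strongly_distorted (prod_set A).
Proof.
move=> /choice[m /choice[w wP]].
apply: (@strongly_distorted_size_le _ _ (\sum_(i < n) m i) (fun k => \sum_(i < n) w i k)).
  by move=> k; apply: sum_ord_gt0 => i; case: (wP i).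
move=> x /prod_set_factors[a [aA xE]].
have /choice[S SP] : forall i, exists S, size S = m i /\
    forall k, in_pow S (w i k) (a k i).
  by move=> i; case: (wP i) => _ /(_ (a^~ i) (aA^~ i)) [S [_ SP]]; exists S.
exists (flatten [seq S i | i <- enum 'I_n]); split; last first.
  by move=> k; rewrite xE; apply: in_pow_flatten => i; case: (SP i).
rewrite size_flatten sumnE /shape big_map big_map big_enum /=.
by apply: leq_sum => i _; case: (SP i) => ->.
Qed.

End ProductSets.

Theorem lemma3p4 (G : groupType) (n : nat) (A : 'I_n -> G -> Prop) :
  0 < n ->
  ((forall i, seq_distorted (A i)) -> seq_distorted (prod_set A)) /\
  ((forall i, strongly_distorted (A i)) -> strongly_distorted (prod_set A)).
Proof.
move=> n_gt0; split.
- exact: seq_distorted_prod_set.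
- exact: strongly_distorted_prod_set.
Qed.
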